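(* Let $H$ be a connected finite simple graph with $|V(H)|\geqslant 4$ that contains no chorded cycle and no Hamiltonian path. Let $P_1=u_1u_2\cdots u_p$ be a longest path in $H$, with $p\geqslant 3$, and let $P_2=v_1v_2\cdots v_q$ be a longest path in $H-V(P_1)$, with $q\geqslant 1$. Suppose $d_{P_1}(v_1)\leqslant d_{P_1}(v_q)$. Then at least one of the following holds: (1) $q\leqslant 2$ and $V(H)=V(P_1)\cup V(P_2)$; (2) $q\geqslant 3$ and $d_H(v_1)=1$; (3) there exists a vertex $w\in V(H)\setminus (V(P_1)\cup\{v_1\})$ such that $d_H(w)\leqslant 2$, $u_1w\notin E(H)$, $u_pw\notin E(H)$, and $w$ is not a cut-vertex of $H$.
   Context: A chord of a cycle $C$ is an edge of the graph not in $E(C)$ with both ends on $C$; a chorded cycle is a cycle with at least one chord. A path is written as its vertex sequence; ''longest'' means having the maximum number of vertices. $H-V(P_1)$ is the subgraph induced by $V(H)\setminus V(P_1)$. For a subgraph $K$ and a vertex $u$, $d_K(u)=|N(u)\cap V(K)|$ is the number of neighbours of $u$ lying in $V(K)$ (in particular $d_H(u)$ is the degree of $u$ in $H$). *)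

From mathcomp Require Import all_boot.
Set Implicit Arguments. Unset Strict Implicit. Unset Printing Implicit Defensive.

Section Graph.
Variables (T : finType) (e : rel T).

Definition simple_graph : Prop := symmetric e /\ irreflexive e.

Definition connected_graph : Prop := forall x y : T, connect e x y.

Definition is_gpath (s : seq T) : bool :=
  if s is x :: s' then path e x s' && uniq s else false.

Definition is_gcycle (c : seq T) : bool :=
  [&& 3 <= size c, uniq c & cycle e c].

Definition is_chord (c : seq T) (x y : T) : bool :=
  [&& x \in c, y \in c, e x y, y != next c x & y != prev c x].

Definition chorded_cycle (c : seq T) : Prop :=
  is_gcycle c /\ exists x y, is_chord c x y.

Definition hamiltonian_path (s : seq T) : Prop :=
  is_gpath s /\ forall v : T, v \in s.

Definition deg (u : T) : nat := #|[set x | e u x]|.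
Definition deg_in (s : seq T) (u : T) : nat := #|[set x | (x \in s) && e u x]|.

(* longest path of H - V(A) (A = [::] gives H itself), counted in vertices *)
Definition avoids (A s : seq T) : bool := all (fun v => v \notin A) s.
Definition longest_path_avoiding (A s : seq T) : Prop :=
  is_gpath s /\ avoids A s /\
  forall s', is_gpath s' -> avoids A s' -> size s' <= size s.

Definition cut_vertex (w : T) : Prop :=
  exists x y : T, [/\ x != w, y != w &
    ~~ connect [rel a b | [&& e a b, a != w & b != w]] x y].

End Graph.

(* A vertex w has degree at most 2 and is not a cut vertex as soon as some path
   starting at w contains all its neighbours: without chorded cycles w has at most
   two neighbours on such a path, and the path reconnects them.
   For a component K of H - V(P1), walking back along P1 from its last vertex
   adjacent to K gives a path T through all neighbours of K on P1.  By induction on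
   |K|, either some path in K ending next to T has a far end w <> v all of whose
   neighbours in K lie on it, so that T completes the path for w, or K has a
   Hamiltonian path ending at v.  In the latter case a Posa rotation produces such a
   w unless v has no further neighbour in K; then v has a neighbour on P1, and the
   first or the second vertex of the Hamiltonian path works, according to the sides
   of that neighbour on which the first vertex has neighbours.
   Taking v = v1, this gives (3) unless H - V(P1) is a single component that has at
   most two vertices, or has more and d(v1) = 1: cases (1) and (2).  Maximality of
   P1 keeps the vertices off P1 away from u1 and up. *)

From mathcomp Require Import all_boot zify.
Set Implicit Arguments. Unset Strict Implicit. Unset Printing Implicit Defensive.

Lemma exists_crossing_edge (T : finType) (r : rel T) (S : pred T) (x y : T) :
  connect r x y -> S x -> ~~ S y -> exists a b, [/\ S a, ~~ S b & r a b].
Proof.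
move=> /connectP [p + ->]; elim: p x => [|z p IH] x /=; first by move=> _ ->.
case/andP=> rxz pth Sx nSl; case Sz: (S z); first exact: IH pth Sz nSl.
by exists x, z; rewrite Sz.
Qed.

Lemma split_last (T : eqType) (p : pred T) s : has p s ->
  exists s1 u s2, [/\ s = s1 ++ u :: s2, p u & ~~ has p s2].
Proof.
elim: s => [|x s IH] //= /orP [px|hs]; last first.
  by have [s1 [u [s2 [-> pu ns2]]]] := IH hs; exists (x :: s1), u, s2.
case hs: (has p s); last by exists [::], x, s; rewrite hs.
by have [s1 [u [s2 [-> pu ns2]]]] := IH hs; exists (x :: s1), u, s2.
Qed.

Lemma card_gt2_other (T : finType) (K : {set T}) (a b : T) :
  2 < #|K| -> exists c, [/\ c \in K, c != a & c != b].
Proof.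
move=> hK; have h1 := cardsD1 a K; have h2 := cardsD1 b (K :\ a).
have : 0 < #|K :\ a :\ b|.
  by move: h1 h2 hK; case: (a \in K); case: (b \in K :\ a) => /=; lia.
by case/card_gt0P => c; rewrite !inE => /and3P [cb ca cK]; exists c.
Qed.

Lemma uniq_perm_catl (T : eqType) (a b c : seq T) :
  perm_eq (a ++ b) c -> uniq c -> uniq a.
Proof. by move=> /perm_uniq <-; rewrite cat_uniq => /and3P []. Qed.

(* The context is cleared because lia would otherwise also process every
   hypothesis of the surrounding proof. *)
Ltac perm_by_count :=
  apply/permP => ?; rewrite -?cats1; do ! progress rewrite /= ?count_cat ?count_rev;
  repeat match goal with H : _ |- _ => clear H end; lia.

Section Graph.
Variables (T : finType) (e : rel T).
Implicit Types (K : {set T}) (r v w x y z : T).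
Hypothesis e_sym : symmetric e.
Hypothesis e_irr : irreflexive e.
Hypothesis conn : connected_graph e.
Hypothesis no_chorded_cycle : forall c : seq T, ~ chorded_cycle e c.

Lemma is_gpathE s : is_gpath e s = [&& s != [::], sorted e s & uniq s].
Proof. by case: s. Qed.

Lemma is_gpath_uniq s : is_gpath e s -> uniq s.
Proof. by rewrite is_gpathE => /and3P []. Qed.

Lemma sorted_rev s : sorted e (rev s) = sorted e s.
Proof. by rewrite rev_sorted; apply: eq_sorted => x y; rewrite e_sym. Qed.

Lemma is_gpath_rev s : is_gpath e (rev s) = is_gpath e s.
Proof. by rewrite !is_gpathE sorted_rev rev_uniq -!size_eq0 size_rev. Qed.

Lemma is_gpath_infix a s : infix a s -> a != [::] -> is_gpath e s -> is_gpath e a.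
Proof.
rewrite !is_gpathE => ias -> /and3P [_ ss us].
by rewrite (infix_sorted ias ss) (infix_uniq ias us).
Qed.

Lemma is_gpath_cat x a y b :
  is_gpath e (x :: a ++ y :: b) =
  [&& is_gpath e (x :: a), e (last x a) y, is_gpath e (y :: b)
    & [disjoint y :: b & x :: a]].
Proof.
rewrite [LHS]/= cat_path /= -[_ && uniq _]/(uniq ((x :: a) ++ y :: b)) cat_uniq.
rewrite disjoint_has /=; set D := ~~ (_ || _).
by case: D; case: (path e x a); case: (path e y b); case: (e _ y);
  case: (x \in a); case: (y \in b); case: (uniq a); case: (uniq b).
Qed.

Lemma is_gpath_rotate A y b B v :
  is_gpath e (A ++ y :: b :: rcons B v) -> e v y ->
  is_gpath e (b :: rcons B v ++ y :: rev A).
Proof.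
rewrite !is_gpathE -cat_rcons => /and3P [_ sg ug] evy.
rewrite (perm_uniq (_ : perm_eq _ (rcons A y ++ b :: rcons B v))); last by perm_by_count.
rewrite ug andbT /= cat_path last_rcons /= evy.
have -> : path e y (rev A) = sorted e (rev (rcons A y)) by rewrite rev_rcons.
rewrite sorted_rev (infix_sorted (prefix_infix _ _) sg) !andbT.
exact: (infix_sorted (suffix_infix _ _) sg).
Qed.

Lemma prev_at_notin (x z : T) p : x \notin p -> prev_at x x z p = last z p.
Proof.
elim: p z => [|y p IH] z /=; first by rewrite eqxx.
by rewrite inE negb_or => /andP [/negbTE -> /IH].
Qed.

Lemma chorded_path_cycle w q Q y :
  is_gpath e (w :: q :: Q) -> e (last q Q) w -> y \in Q -> y != last q Q ->
  e w y -> chorded_cycle e (w :: q :: Q).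
Proof.
move=> gc elw yQ yl ewy; have uc := is_gpath_uniq gc.
move: (uc) => /= /and3P [wqQ qQ _]; move: wqQ; rewrite inE negb_or => /andP [wq wQ].
split.
  rewrite /is_gcycle uc /= rcons_path elw andbT; apply/andP; split.
    by case: (Q) yQ.
  by case/andP: gc.
exists w, y; rewrite /is_chord mem_head !inE yQ !orbT ewy /= eqxx (negbTE wq).
rewrite prev_at_notin // yl andbT; apply: contraNneq qQ => <-; exact: yQ.
Qed.

(* Any neighbour of w on Q other than the first vertex of Q and the last neighbour
   u of w would be a chord of the cycle formed by w and Q up to u. *)
Lemma path_head_deg_in w Q : is_gpath e (w :: Q) -> deg_in e Q w <= 2.
Proof.
move=> gwQ; case: (boolP (has (e w) Q)) => [hasQ|/hasPn noQ]; last first.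
  rewrite /deg_in (_ : [set x | _] = set0) ?cards0 //.
  by apply/setP => x; rewrite !inE; apply/negbTE/andP => -[/noQ/negP].
have [Q1 [u [Q2 [dQ wu nQ2]]]] := split_last hasQ.
suff nbr : {in Q, forall z, e w z -> z \in [set head u Q1; u]}.
  apply: leq_trans (_ : #|[set head u Q1; u]| <= 2); last by rewrite cards2 ltnS leq_b1.
  by apply: subset_leq_card; apply/subsetP => z; rewrite inE => /andP [/nbr].
move=> z zQ ewz; rewrite !inE.
have {zQ} : z \in rcons Q1 u.
  move: zQ; rewrite dQ -cat_rcons mem_cat => /orP [-> //|zQ2].
  by case/hasP: nQ2; exists z.
rewrite mem_rcons inE => /orP [/eqP ->|]; first by rewrite eqxx orbT.
case: Q1 dQ => [|q Q1] // dQ; rewrite inE => /orP [/eqP ->|zQ1]; first by rewrite eqxx.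
have g : is_gpath e (w :: q :: rcons Q1 u).
  by apply: is_gpath_infix gwQ; rewrite // dQ -cat_rcons -!cat_cons prefix_infix.
have zl : z != last q (rcons Q1 u).
  rewrite last_rcons; apply: contraTneq zQ1 => ->.
  by move: (is_gpath_uniq g) => /= /and3P [_ _]; rewrite rcons_uniq => /andP [].
case: (no_chorded_cycle (chorded_path_cycle g _ _ zl ewz)).
- by rewrite last_rcons e_sym.
- by rewrite mem_rcons inE zQ1 orbT.
Qed.

Lemma path_head_not_cut w q Q :
  is_gpath e (w :: q :: Q) -> (forall x, e w x -> x \in q :: Q) -> ~ cut_vertex e w.
Proof.
move=> /andP [/= /andP [_ pqQ] /andP [wqQ _]] nbr.
set Rw := [rel a b | [&& e a b, a != w & b != w]].
have csym : connect_sym Rw.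
  by apply: sym_connect_sym => a b /=; rewrite e_sym [(a != w) && _]andbC.
have onQ z : z \in q :: Q -> connect Rw q z.
  apply: path_connect; apply: (@sub_in_path _ (predC1 w) e) pqQ.
    by move=> a b /[!inE] aw bw /= ->; rewrite aw bw.
  by apply/allP => x; apply: contraTneq => ->.
have toq x : x != w -> connect Rw x q.
  move=> xw; set S := [pred z | (z != w) && connect Rw x z].
  have [a [b [/andP [aw xa] Sb eab]]] : exists a b, [/\ S a, ~~ S b & e a b].
    by apply: exists_crossing_edge (conn x w) _ _; rewrite /= ?xw ?connect0 ?eqxx.
  case: (eqVneq b w) => [bw|bw].
    by apply: connect_trans xa _; rewrite csym; apply/onQ/nbr; rewrite -bw e_sym.
  case/negP: Sb; rewrite /= bw (connect_trans xa) // connect1 //= eab aw.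
  exact: bw.
by move=> [x [y [xw yw]]]; rewrite (connect_trans (toq x xw)) // csym toq.
Qed.

Definition small_noncut w := deg e w <= 2 /\ ~ cut_vertex e w.

Lemma path_head_small_noncut w Q :
  is_gpath e (w :: Q) -> Q != [::] -> (forall x, e w x -> x \in Q) ->
  small_noncut w.
Proof.
case: Q => [|q Q] // g _ nbr; split; last exact: (path_head_not_cut g nbr).
rewrite /deg; have -> : [set x | e w x] = [set x | (x \in q :: Q) && e w x].
  by apply/setP => x; rewrite !in_set; case ewx: (e w x); rewrite ?andbF ?andbT ?nbr.
exact: path_head_deg_in.
Qed.

Lemma two_paths_small_noncut w T3 T4 a b :
  is_gpath e (w :: T3) -> is_gpath e (w :: T4) ->
  a \in T3 -> b \in T3 -> a \in T4 -> b \in T4 -> a != b -> e w a -> e w b ->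
  (forall y, e w y -> (y \in T3) || (y \in T4)) -> small_noncut w.
Proof.
move=> g3 g4 a3 b3 a4 b4 ab wa wb cover.
apply: (path_head_small_noncut g3); first by case: (T3) a3.
move=> y wy; apply/negPn/negP => yT3.
have yT4 : y \in T4 by move: (cover y wy); rewrite (negbTE yT3).
have := path_head_deg_in g4; rewrite leqNgt => /negP; apply; apply/card_gt2P.
exists a, b, y; split; split; rewrite ?inE ?a4 ?b4 ?yT4 ?wa ?wb ?wy //.
  by apply: contraNneq yT3 => <-.
by apply: contraNneq yT3 => ->.
Qed.

Definition induced (K : {set T}) := [rel a b | [&& e a b, a \in K & b \in K]].
Definition component (K : {set T}) a := [set z | connect (induced K) a z].
Definition connected_set (K : {set T}) := forall S : pred T,
  (exists2 x, x \in K & S x) -> (exists2 y, y \in K & ~~ S y) ->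
  exists a b, [/\ a \in K, b \in K, S a, ~~ S b & e a b].

Lemma induced_connect_sym K : connect_sym (induced K).
Proof.
by apply: sym_connect_sym => a b /=; rewrite e_sym [(a \in K) && _]andbC.
Qed.

Lemma mem_component K a : a \in component K a.
Proof. by rewrite inE connect0. Qed.

Lemma component_sym K a x : (x \in component K a) = (a \in component K x).
Proof. by rewrite !inE induced_connect_sym. Qed.

Lemma component_trans K a x y :
  x \in component K a -> y \in component K x -> y \in component K a.
Proof. by rewrite !inE; apply: connect_trans. Qed.

Lemma component_sub K a x : a \in K -> x \in component K a -> x \in K.
Proof.
move=> aK; rewrite inE => /connectP [p + ->]; elim: p a aK => [|y p IH] a aK //=.
by case/andP => /and3P [_ _ yK] /(IH y yK).
Qed.

Lemma component_closed K a x y :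
  a \in K -> x \in component K a -> y \in K -> e x y -> y \in component K a.
Proof.
move=> aK xC yK exy; have xK := component_sub aK xC.
by apply: component_trans xC _; rewrite inE connect1 //= exy xK.
Qed.

Lemma connected_component K a : a \in K -> connected_set (component K a).
Proof.
move=> aK S [x xC Sx] [y yC nSy].
set S' := [pred z | S z && (z \in component K a)].
have [b [c [/andP [Sb bC] nS'c /and3P [ebc _ cK]]]] :
    exists b c, [/\ S' b, ~~ S' c & induced K b c].
  apply: exists_crossing_edge (_ : connect _ x y) _ _; rewrite /= ?Sx ?(negbTE nSy) //.
  by move: xC yC; rewrite component_sym !inE; apply: connect_trans.
have cC := component_closed aK bC cK ebc.
by exists b, c; split => //; move: nS'c; rewrite /= cC andbT.
Qed.

Definition leaf_path K r w W :=
  [/\ is_gpath e (w :: W), {subset w :: W <= K}, last w W = r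
    & forall x, x \in K -> e w x -> x \in w :: W].

Definition ham_path K r X := is_gpath e (r :: X) /\ K =i r :: X.

Lemma ham_leaf K r w W :
  is_gpath e (w :: W) -> K =i w :: W -> last w W = r -> leaf_path K r w W.
Proof. by move=> g KW lW; split => // [x|x]; rewrite KW. Qed.

Lemma leaf_path_ext K r b w W :
  r \in K -> b \in K :\ r -> e b r ->
  leaf_path (component (K :\ r) b) b w W -> leaf_path K r w (rcons W r).
Proof.
move=> rK bK' ebr [gW subW lW nbW].
have subK' : {subset w :: W <= K :\ r} by move=> x /subW; apply: component_sub.
have rW : r \notin w :: W by apply/negP => /subK'; rewrite !inE eqxx.
split; rewrite -?rcons_cons ?last_rcons //.
- by rewrite -cats1 is_gpath_cat gW lW ebr disjoint_has /= orbF rW.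
- by move=> x; rewrite mem_rcons inE => /orP [/eqP -> //|/subK' /setD1P []].
move=> x xK ewx; rewrite mem_rcons inE; case: eqP => //= /eqP xr.
apply: nbW (ewx); apply: component_closed bK' _ _ ewx; first exact/subW/mem_head.
by rewrite !inE xr.
Qed.

Lemma root_nbr_component K r v :
  connected_set K -> r \in K -> (exists2 x, x \in K & x != r) ->
  exists b, [/\ b \in K :\ r, e b r &
    (v \notin component (K :\ r) b) || (K :\ r \subset component (K :\ r) b)].
Proof.
move=> cK rK [x xK xr]; set K' := K :\ r.
have [a0 [b0 [_ b0K /eqP a0r b0r erb0]]] :=
  cK (pred1 r) (ex_intro2 _ _ r rK (eqxx r)) (ex_intro2 _ _ x xK xr).
subst a0.
have b0K' : b0 \in K' by rewrite !inE b0r.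
have [sub|/subsetPn [t tK' tb0]] := boolP (K' \subset component K' b0).
  by exists b0; split; rewrite // ?sub ?orbT // e_sym.
have [vb0|vb0] := boolP (v \in component K' b0); last first.
  by exists b0; split; rewrite // ?vb0 // e_sym.
have rt : r \notin component K' t by apply/negP => /(component_sub tK'); rewrite !inE eqxx.
have [a [r' [_ r'K ta tr' ear']]] :=
  cK (mem (component K' t)) (ex_intro2 _ _ t (setD1P tK').2 (mem_component _ _))
     (ex_intro2 _ _ r rK rt).
have r'r : r' = r.
  apply/eqP; apply: contraNT tr' => r'r; apply: component_closed tK' ta _ ear'.
  by rewrite !inE r'r.
exists a; rewrite -r'r ear'; split => //; first exact: component_sub tK' ta.
apply/orP; left; apply: contra tb0 => va; apply: component_trans vb0 _.
by apply: (component_trans (x := a)); rewrite component_sym.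
Qed.

(* Induction on |K|: recurse into a component of K - r attached to r, avoiding the
   component of v when possible. *)
Lemma leaf_or_ham K r v :
  connected_set K -> r \in K ->
  (exists w W, w != v /\ leaf_path K r w W) \/
  (exists X, ham_path K r X /\ last r X = v).
Proof.
move: {2}#|K| (leqnn #|K|) => n; elim: n K r => [|n IH] K r hK cK rK.
  by move: hK; rewrite leqn0 => /eqP /cards0_eq K0; rewrite K0 inE in rK.
have [/existsP [x /andP [xK xr]]|/existsPn single] := boolP [exists x, (x \in K) && (x != r)].
  have [b [bK' ebr hb]] := root_nbr_component v cK rK (ex_intro2 _ _ x xK xr).
  set C := component (K :\ r) b.
  have CK : C \subset K :\ r by apply/subsetP => y; apply: component_sub.
  have hC : #|C| <= n.
    apply: leq_trans (subset_leq_card CK) _.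
    by move: hK; rewrite (cardsD1 r K) rK.
  have [[w [W [wv lp]]]|[X [[gX CX] lX]]] :=
    IH C b hC (connected_component bK') (mem_component _ _).
    by left; exists w, (rcons W r); split => //; apply: leaf_path_ext lp.
  have {hb} KC : K :\ r \subset C.
    by move: hb; rewrite CX -lX mem_last.
  have rX : r \notin b :: X by rewrite -CX; apply/negP => /(subsetP CK); rewrite !inE eqxx.
  right; exists (b :: X); split => //; split.
    by move: gX rX => /= /andP [-> ->]; rewrite e_sym ebr => ->.
  move=> y; rewrite in_cons -CX; case: eqVneq => [->|yr] //=.
  apply/idP/idP => [yK|/(subsetP CK) /setD1P [] //]; apply/(subsetP KC).
  by rewrite !inE yr.
have Kr : K =i [:: r].
  move=> y; rewrite inE; apply/idP/eqP => [yK|-> //]; apply/eqP.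
  by move: (single y); rewrite yK /= negbK.
have [rv|rv] := eqVneq r v.
  by right; exists [::]; split.
by left; exists r, [::]; split => //; apply: ham_leaf.
Qed.

Lemma leaf_path_mem K r w W : leaf_path K r w W -> w \in K.
Proof. by case=> _ WK _ _; apply/WK/mem_head. Qed.

Lemma ham_rotate_leaf K k0 X y :
  ham_path K k0 X -> y \in K -> e (last k0 X) y -> y != last k0 (belast k0 X) ->
  exists w W, w != last k0 X /\ leaf_path K k0 w W.
Proof.
move=> [gX KX] yK evy ypred; set v := last k0 X in evy *.
have yv : y != v by apply: contraTneq evy => ->; rewrite e_irr.
have /splitPr yY : y \in belast k0 X.
  by move: yK; rewrite KX lastI mem_rcons inE (negbTE yv).
have [A [[|b B] dY]] : exists A B, belast k0 X = A ++ y :: B by case: yY => A B; exists A, B.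
  by rewrite dY last_cat eqxx in ypred.
have dH : k0 :: X = A ++ y :: b :: rcons B v by rewrite lastI dY rcons_cat.
have g : is_gpath e (b :: rcons B v ++ y :: rev A) by apply: is_gpath_rotate; rewrite -?dH.
exists b, (rcons B v ++ y :: rev A); split.
  by apply: contraTneq (is_gpath_uniq g) => ->; rewrite /= mem_cat mem_rcons mem_head.
apply: ham_leaf g _ _.
  by move=> x; rewrite KX dH; apply: perm_mem; perm_by_count.
rewrite last_cat /=; case: (A) dH => [|a A'] [-> _] //.
by rewrite rev_cons last_rcons.
Qed.

Section Attached.
Variables (s : seq T) (K : {set T}).
Hypothesis gs : is_gpath e s.
Hypothesis K_s : forall x, x \in K -> x \notin s.
Hypothesis K_closed : forall x y, x \in K -> e x y -> (y \in K) || (y \in s).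

(* t :: Tl leaves K through the edge k0 t and passes through every neighbour of K
   on s: it is s walked backwards from its last vertex adjacent to K. *)
Definition attachment k0 t Tl :=
  [/\ k0 \in K, e k0 t, is_gpath e (t :: Tl), {subset t :: Tl <= s}
    & forall x y, x \in K -> e x y -> y \in s -> y \in t :: Tl].

Lemma exists_attachment : (exists x, x \in K) -> exists k0 t Tl, attachment k0 t Tl.
Proof.
move=> [x0 x0K]; set p := [pred y | [exists x, (x \in K) && e x y]].
have hp : has p s.
  have [u us] : exists u, u \in s by case: (s) gs => // u ? _; exists u; rewrite mem_head.
  have [a [b [aK bK eab]]] : exists a b, [/\ a \in K, b \notin K & e a b].
    by apply: exists_crossing_edge (conn x0 u) x0K _; apply: contraL us; apply: K_s.
  apply/hasP; exists b; first by move: (K_closed aK eab); rewrite (negbTE bK).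
  by apply/existsP; exists a; rewrite aK eab.
have [s1 [t [s2 [ds pt ns2]]]] := split_last hp.
have [k0 /andP [k0K ek0t]] := existsP pt.
exists k0, t, (rev s1); split => //.
- rewrite -rev_rcons is_gpath_rev; apply: is_gpath_infix gs; last by case: (s1).
  by rewrite ds -cat_rcons prefix_infix.
- by move=> z; rewrite inE mem_rev ds mem_cat inE => /orP [->|->]; rewrite ?orbT.
move=> x y xK exy; rewrite ds mem_cat !inE mem_rev => /or3P [->|->|ys2]; rewrite ?orbT //.
by case/hasP: ns2; exists y => //; apply/existsP; exists x; rewrite xK.
Qed.

Lemma leaf_small_noncut k0 t Tl w W :
  attachment k0 t Tl -> leaf_path K k0 w W -> small_noncut w.
Proof.
move=> [k0K ek0t gT Ts Tnbr] [gW WK lW nbW].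
apply: (@path_head_small_noncut _ (W ++ t :: Tl)).
- rewrite is_gpath_cat gW lW ek0t gT disjoint_has; apply/hasPn => z /Ts zs.
  by apply: contraL zs => /WK; apply: K_s.
- by case: (W).
move=> x ewx; have wK : w \in K by apply/WK/mem_head.
case/orP: (K_closed wK ewx) => [xK|xs]; last by rewrite mem_cat (Tnbr w) ?orbT.
move: (nbW x xK ewx); rewrite inE mem_cat => /orP [/eqP xw|-> //].
by move: ewx; rewrite xw e_irr.
Qed.

Lemma ham_start_one_side k0 X ub R :
  ham_path K k0 X -> X != [::] -> e (last k0 X) ub ->
  is_gpath e (ub :: R) -> {subset ub :: R <= s} ->
  (forall y, y \in s -> e k0 y -> y \in ub :: R) -> small_noncut k0.
Proof.
move=> [gH KH] Xn evub gR Rs nbR.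
have g : is_gpath e (k0 :: X ++ ub :: R).
  rewrite is_gpath_cat gH evub gR disjoint_has; apply/hasPn => z /Rs zs.
  by apply: contraL zs; rewrite -KH; apply: K_s.
apply: (path_head_small_noncut g); first by case: (X) Xn.
move=> x ex; have k0K : k0 \in K by rewrite KH mem_head.
case/orP: (K_closed k0K ex) => [|xs]; last by rewrite mem_cat nbR ?orbT.
rewrite KH inE mem_cat => /orP [/eqP xk0|-> //].
by move: ex; rewrite xk0 e_irr.
Qed.

Lemma ham_path_uniq_cat k0 X : ham_path K k0 X -> uniq ((k0 :: X) ++ s).
Proof.
case=> gH KH; rewrite cat_uniq (is_gpath_uniq gH) (is_gpath_uniq gs) andbT /=.
by apply/hasPn => z zs; apply: contraL zs; rewrite -KH; apply: K_s.
Qed.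

(* Since k0 has neighbours uc before and ud after ub on s, both x2 :: T3 and
   x2 :: T4 below are paths, and together they cover s. *)
Lemma ham_second_small_noncut k0 x2 x3 X3 ub uc ud S1a S1b S3a S3b :
  s = S1a ++ uc :: S1b ++ ub :: S3a ++ ud :: S3b ->
  ham_path K k0 [:: x2, x3 & X3] -> e (last x3 X3) ub -> e k0 uc -> e k0 ud ->
  small_noncut x2.
Proof.
set X := [:: x2, x3 & X3] => ds hH evub ek0c ek0d.
have uHs := ham_path_uniq_cat hH; case: hH => gH KH.
have /and3P [ek0x2 ex2x3 pX3] : [&& e k0 x2, e x2 x3 & path e x3 X3] by case/andP: gH.
have /and4P [sS1a pS1b eS1b /and3P [pS3a eS3a pS3b]] :
    [&& sorted e (rcons S1a uc), path e uc S1b, e (last uc S1b) ub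
      & [&& path e ub S3a, e (last ub S3a) ud & path e ud S3b]].
  by move: gs; rewrite is_gpathE ds sorted_cat_cons /= cat_path /= cat_path => /and3P [].
have pS1a : path e uc (rev S1a).
  by rewrite -[path _ _ _]/(sorted e (uc :: rev S1a)) -rev_rcons sorted_rev.
have /andP [pS1b' eS1b'] : path e ub (rev S1b) && e (last ub (rev S1b)) uc.
  have : sorted e (uc :: rcons S1b ub) by rewrite /= rcons_path pS1b eS1b.
  by rewrite -sorted_rev rev_cons rev_rcons /= rcons_path.
set T3 := x3 :: X3 ++ ub :: S3a ++ ud :: k0 :: uc :: rev S1a.
set T4 := x3 :: X3 ++ ub :: rev S1b ++ uc :: k0 :: ud :: S3b.
have g3 : is_gpath e (x2 :: T3).
  rewrite is_gpathE; apply/and3P; split => //.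
    by rewrite /= cat_path /= cat_path /= ex2x3 pX3 evub pS3a eS3a e_sym ek0d ek0c.
  by apply: (@uniq_perm_catl _ _ (S1b ++ S3b) _ _ uHs); rewrite ds /T3 /X; perm_by_count.
have g4 : is_gpath e (x2 :: T4).
  rewrite is_gpathE; apply/and3P; split => //.
    by rewrite /= cat_path /= cat_path /= ex2x3 pX3 evub pS1b' eS1b' e_sym ek0c ek0d.
  by apply: (@uniq_perm_catl _ _ (S1a ++ S3a) _ _ uHs); rewrite ds /T4 /X; perm_by_count.
have k0x3 : k0 != x3.
  move: (is_gpath_uniq gH) => /andP [+ _]; rewrite /X !inE.
  by apply: contra => /eqP ->; rewrite eqxx orbT.
have ex2k0 : e x2 k0 by rewrite e_sym.
apply: (two_paths_small_noncut g3 g4 (a := k0) (b := x3)); rewrite ?mem_head //.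
- by rewrite !(inE, mem_cat) eqxx !orbT.
- by rewrite !(inE, mem_cat) eqxx !orbT.
move=> y ex2y; have x2K : x2 \in K by rewrite KH !inE eqxx orbT.
case/orP: (K_closed x2K ex2y) => [|ys].
  rewrite KH !inE => /or4P [/eqP ->|/eqP yx2|/eqP ->|yX3].
  - by rewrite !(inE, mem_cat) eqxx !orbT.
  - by move: ex2y; rewrite yx2 e_irr.
  - by rewrite eqxx.
  by rewrite mem_cat yX3 !orbT.
move: ys; rewrite ds /T3 /T4 !(inE, mem_cat, mem_rev) => h.
by repeat case/orP: h => h; rewrite h ?orbT.
Qed.

Lemma ham_start_small_noncut k0 x2 x3 X3 ub :
  ham_path K k0 [:: x2, x3 & X3] -> ub \in s -> e (last x3 X3) ub ->
  small_noncut k0 \/ small_noncut x2.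
Proof.
move=> hH ubs evub.
have [S1 [S3 ds]] : exists S1 S3, s = S1 ++ ub :: S3.
  by case/splitPr: ubs => S1 S3; exists S1, S3.
have [/hasP [uc ucS1 ek0c]|/hasPn nS1] := boolP (has (e k0) S1); last first.
  left; apply: (ham_start_one_side (R := S3) hH _ evub) => //.
  - by apply: is_gpath_infix gs => //; rewrite ds suffix_infix.
  - by move=> z zS3; rewrite ds mem_cat zS3 orbT.
  by move=> y; rewrite ds mem_cat => /orP [/nS1 /negP|].
have [/hasP [ud udS3 ek0d]|/hasPn nS3] := boolP (has (e k0) S3); last first.
  left; apply: (ham_start_one_side (R := rev S1) hH _ evub) => //.
  - rewrite -rev_rcons is_gpath_rev; apply: is_gpath_infix gs; last by case: (S1).
    by rewrite ds -cat_rcons prefix_infix.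
  - by move=> z; rewrite inE mem_rev ds mem_cat inE => /orP [->|->]; rewrite ?orbT.
  by move=> y; rewrite ds mem_cat !inE mem_rev => /or3P [->|->|/nS3 /negP] //; rewrite orbT.
case/splitPr: ucS1 ds => S1a S1b; case/splitPr: udS3 => S3a S3b ds.
by right; apply: ham_second_small_noncut hH evub ek0c ek0d; rewrite ds -catA.
Qed.

Lemma ham_exists_small_noncut k0 t Tl X :
  attachment k0 t Tl -> ham_path K k0 X -> 2 < #|K| -> 1 < deg e (last k0 X) ->
  exists w, [/\ w \in K, w != last k0 X & small_noncut w].
Proof.
move=> att hX cardK; have [gX KX] := hX; set v := last k0 X => dv.
have vK : v \in K by rewrite KX mem_last.
have [/existsP [y /and3P [yK evy ypred]]|/existsPn nopred] :=
  boolP [exists y, [&& y \in K, e v y & y != last k0 (belast k0 X)]].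
  have [w [W [wv lp]]] := ham_rotate_leaf hX yK evy ypred.
  by exists w; split; [apply: leaf_path_mem lp | | apply: leaf_small_noncut att lp].
have [ub ubs evub] : exists2 ub, ub \in s & e v ub.
  have [n1 [n2 [vn1 vn2 n12]]] := card_gt1P dv; rewrite !inE in vn1 vn2.
  have pred n : e v n -> n \in K -> n = last k0 (belast k0 X).
    by move=> vn nK; apply/eqP; move: (nopred n); rewrite nK vn /= negbK.
  case/orP: (K_closed vK vn1) => [n1K|]; last by exists n1.
  case/orP: (K_closed vK vn2) => [n2K|]; last by exists n2.
  by move: n12; rewrite (pred _ vn1 n1K) (pred _ vn2 n2K) eqxx.
have [x2 [x3 [X3 dX]]] : exists x2 x3 X3, X = [:: x2, x3 & X3].
  have cardX : #|K| = size (k0 :: X).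
    by rewrite -(card_uniqP (is_gpath_uniq gX)); apply: eq_card.
  by rewrite cardX in cardK; case: (X) cardK => [|x2 [|x3 X3]] // _; exists x2, x3, X3.
subst X v; have uX := is_gpath_uniq gX.
have [k0ok|x2ok] := ham_start_small_noncut hX ubs evub.
  exists k0; split; rewrite ?KX ?mem_head //.
  by apply: contraNneq (_ : k0 \notin [:: x2, x3 & X3]) => [->|]; [exact: (mem_last x2 (x3 :: X3))|case/andP: uX].
exists x2; split; rewrite ?KX ?inE ?eqxx ?orbT //.
apply: contraNneq (_ : x2 \notin x3 :: X3) => [->|]; first exact: (mem_last x3 X3).
by case/and3P: uX.
Qed.

Lemma exists_small_noncut v :
  connected_set K -> (exists x, x \in K) -> v \notin K \/ 2 < #|K| /\ 1 < deg e v ->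
  exists w, [/\ w \in K, w != v & small_noncut w].
Proof.
move=> cK Kn hv; have [k0 [t [Tl att]]] := exists_attachment Kn.
have k0K : k0 \in K by case: att.
have [[w [W [wv lp]]]|[X [hX lX]]] := leaf_or_ham v cK k0K.
  by exists w; split; [apply: leaf_path_mem lp | | apply: leaf_small_noncut att lp].
subst v; have vK : last k0 X \in K by case: hX => _ ->; apply: mem_last.
have [cardK dv] : 2 < #|K| /\ 1 < deg e (last k0 X) by case: hv; rewrite ?vK.
exact: ham_exists_small_noncut att hX cardK dv.
Qed.

End Attached.

Lemma outside_component_small_noncut s a v :
  is_gpath e s -> a \notin s ->
  let K := component [set x | x \notin s] a in
  v \notin K \/ 2 < #|K| /\ 1 < deg e v ->
  exists w, [/\ w \notin s, w != v & small_noncut w].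
Proof.
move=> gs aS K hv; set R := [set x | x \notin s].
have aR : a \in R by rewrite inE.
have K_s x : x \in K -> x \notin s by move/(component_sub aR); rewrite inE.
have K_closed x y : x \in K -> e x y -> (y \in K) || (y \in s).
  move=> xK exy; case ys: (y \in s); first by rewrite orbT.
  by rewrite (component_closed aR xK _ exy) // inE ys.
have [w [/K_s ws wv ok]] := exists_small_noncut gs K_s K_closed
  (connected_component aR) (ex_intro _ a (mem_component _ _)) hv.
by exists w.
Qed.

Lemma connected_set_nbr K a b :
  connected_set K -> a \in K -> b \in K -> a != b ->
  exists c, [/\ c \in K, c != a & e a c].
Proof.
move=> cK aK bK ab.
have [a' [c [_ cK' /eqP -> ca eac]]] :
    exists a' c, [/\ a' \in K, c \in K, pred1 a a', ~~ pred1 a c & e a' c].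
  by apply: cK; [exists a; rewrite /= ?eqxx | exists b; rewrite //= eq_sym].
by exists c.
Qed.

Lemma connected_set_path3 K a :
  connected_set K -> a \in K -> 2 < #|K| ->
  exists p, [/\ is_gpath e p, {subset p <= K} & size p = 3].
Proof.
move=> cK aK hK; have [b0 [b0K b0a _]] := card_gt2_other a a hK.
have [b [bK ba eab]] : exists b, [/\ b \in K, b != a & e a b].
  by apply: connected_set_nbr b0K _ => //; rewrite eq_sym.
have [c0 [c0K c0a c0b]] := card_gt2_other a b hK.
have [x [c [_ cK' xab /norP [ca cb] exc]]] : exists x c,
    [/\ x \in K, c \in K, (x == a) || (x == b), ~~ ((c == a) || (c == b)) & e x c].
  by apply: cK; [exists a; rewrite ?eqxx | exists c0 => //; rewrite /= (negbTE c0a) (negbTE c0b)].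
have sub3 y1 y2 y3 : y1 \in K -> y2 \in K -> y3 \in K -> {subset [:: y1; y2; y3] <= K}.
  by move=> ? ? ? u; rewrite !inE => /or3P [] /eqP ->.
case/orP: xab => /eqP xe; subst x.
  exists [:: b; a; c]; split => //; last exact: sub3.
  by rewrite /= e_sym eab exc !inE negb_or ba [b == c]eq_sym cb [a == c]eq_sym ca.
exists [:: a; b; c]; split => //; last exact: sub3.
by rewrite /= eab exc !inE negb_or [a == b]eq_sym ba [a == c]eq_sym ca [b == c]eq_sym cb.
Qed.

Lemma longest_path_ends_nonadj x P w :
  longest_path_avoiding e [::] (x :: P) -> w \notin x :: P ->
  ~~ e x w /\ ~~ e (last x P) w.
Proof.
move=> [g [_ long]] wP.
have short s' : is_gpath e s' -> size s' <= size (x :: P) by move/long; apply; apply/allP.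
split; apply/negP => ew.
  suff /short : is_gpath e (w :: x :: P) by rewrite -[size (w :: _)]/(size (x :: P)).+1 ltnn.
  by move: g => /andP [pP uP]; rewrite /= e_sym ew wP pP.
suff /short : is_gpath e (rcons (x :: P) w) by rewrite size_rcons ltnn.
rewrite rcons_cons -cats1 is_gpath_cat g ew /= disjoint_has /= orbF.
exact: wP.
Qed.

Lemma small_component_cover s v1 P :
  longest_path_avoiding e s (v1 :: P) ->
  let K := component [set x | x \notin s] v1 in
  (forall x, x \notin s -> x \in K) -> #|K| <= 2 ->
  size (v1 :: P) <= 2 /\ forall v, (v \in s) || (v \in v1 :: P).
Proof.
move=> [gP [avP long]] K inK hK.
have v1R : v1 \in [set x | x \notin s] by rewrite inE; case/andP: avP.
have PK x : x \in v1 :: P -> x \in K by move=> xP; apply/inK; move/allP: avP; apply.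
split.
  rewrite -(card_uniqP (is_gpath_uniq gP)); apply: leq_trans hK.
  by apply/subset_leq_card/subsetP.
move=> v; case: (boolP (v \in s)) => //= vs.
have [->|vv1] := eqVneq v v1; first exact: mem_head.
have vK := inK v vs.
have only z : z \in K -> z != v1 -> z = v.
  move=> zK zv1; apply/eqP; apply: contraTT hK => zv; rewrite -ltnNge.
  apply/card_gt2P; exists v1, v, z; rewrite mem_component vK zK [v1 == v]eq_sym [v == z]eq_sym.
  by rewrite vv1 zv zv1.
have [c [cK cv1 ev1c]] : exists c, [/\ c \in K, c != v1 & e v1 c].
  by apply: (connected_set_nbr (connected_component v1R) (mem_component _ _) vK); rewrite eq_sym.
have v1v : is_gpath e [:: v1; v] by rewrite /= -(only c) // ev1c inE eq_sym cv1.
have : size [:: v1; v] <= size (v1 :: P).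
  by apply: (long _ v1v); move: avP; rewrite /avoids /= vs => /andP [-> _].
case: P {long} gP avP PK => [|p P] // gP _ PK _.
have pv1 : p != v1 by move: (is_gpath_uniq gP); rewrite /= inE negb_or eq_sym => /andP [/andP []].
by rewrite (only p) ?PK ?inE ?eqxx ?orbT.
Qed.

Lemma outside_path3 s v1 P :
  longest_path_avoiding e s (v1 :: P) ->
  2 < #|component [set x | x \notin s] v1| -> 3 <= size (v1 :: P).
Proof.
move=> [gP [avP long]] big.
have v1R : v1 \in [set x | x \notin s] by rewrite inE; case/andP: avP.
have [p [gp pK <-]] := connected_set_path3 (connected_component v1R) (mem_component _ _) big.
by apply: long gp _; apply/allP => x /pK /(component_sub v1R); rewrite inE.
Qed.

Lemma component_deg_gt0 K a : a \in K -> 1 < #|component K a| -> 0 < deg e a.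
Proof.
move=> aK /card_gt1P [x [y [xC yC xy]]].
have [b bC ba] : exists2 b, b \in component K a & b != a.
  by case: (eqVneq x a) => [xa|]; [exists y; rewrite // eq_sym -xa | exists x].
have [c [_ _ eac]] : exists c, [/\ c \in component K a, c != a & e a c].
  by apply: connected_set_nbr (connected_component aK) (mem_component _ _) bC _; rewrite eq_sym.
by apply/card_gt0P; exists c; rewrite inE.
Qed.

End Graph.

Theorem lemma2p4 (T : finType) (e : rel T) (u1 : T) (P1' : seq T)
    (v1 : T) (P2' : seq T) :
  simple_graph e ->
  connected_graph e ->
  4 <= #|T| ->
  (forall c : seq T, ~ chorded_cycle e c) ->
  (forall s : seq T, ~ hamiltonian_path e s) ->
  longest_path_avoiding e [::] (u1 :: P1') ->
  3 <= size (u1 :: P1') ->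
  longest_path_avoiding e (u1 :: P1') (v1 :: P2') ->
  deg_in e (u1 :: P1') v1 <= deg_in e (u1 :: P1') (last v1 P2') ->
  (size (v1 :: P2') <= 2 /\ (forall v : T, (v \in u1 :: P1') || (v \in v1 :: P2'))) \/
  (3 <= size (v1 :: P2') /\ deg e v1 = 1) \/
  (exists w : T, [/\ w \notin u1 :: P1', w != v1, deg e w <= 2,
        ~~ e u1 w /\ ~~ e (last u1 P1') w & ~ cut_vertex e w]).
Proof.
move=> [e_sym e_irr] conn _ no_chord _ LP1 _ LP2 _.
set s := u1 :: P1' in LP1 LP2 *; have gs : is_gpath e s by case: LP1.
have v1s : v1 \notin s by case: LP2 => _ [/andP []].
have found w : w \notin s -> w != v1 -> small_noncut e w ->
    exists w, [/\ w \notin s, w != v1, deg e w <= 2,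
      ~~ e u1 w /\ ~~ e (last u1 P1') w & ~ cut_vertex e w].
  move=> ws wv1 [dw cw]; exists w; split => //.
  exact: (@longest_path_ends_nonadj _ _ e_sym u1 P1').
set R := [set x | x \notin s]; set K := component e R v1.
have [/existsP [t /andP [ts tK]]|/existsPn inK] := boolP [exists t, (t \notin s) && (t \notin K)].
  have v1t : v1 \notin component e R t by apply: contra tK; rewrite component_sym.
  have [w [ws wv1 ok]] :=
    outside_component_small_noncut e_sym e_irr conn no_chord gs ts (or_introl v1t).
  by right; right; apply: found ok.
have {}inK x : x \notin s -> x \in K by move=> xs; move: (inK x); rewrite xs /= negbK.
have [small|big] := leqP #|K| 2; first by left; apply: small_component_cover inK small.
right; have [->|d1] := eqVneq (deg e v1) 1.
  by left; split => //; apply: outside_path3 LP2 big.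
right; have dv1 : 1 < deg e v1.
  by rewrite ltn_neqAle eq_sym d1 (@component_deg_gt0 _ _ e_sym R) ?inE // ltnW.
have [w [ws wv1 ok]] :=
  outside_component_small_noncut e_sym e_irr conn no_chord gs v1s (or_intror (conj big dv1)).
exact: found ok.
Qed.
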